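(* Let $\tilde t[\mathbf x](z,\mathbf Z)$ be an abstract $\mathcal L$-hedge containing the single $\mathcal Z$-variable $z$, and let $a\in\mathcal{T_{L_\mathfrak A}(\emptyset)}$ and $c\in\mathcal{T_{L_\mathfrak B}(\emptyset)}$ be ground terms. If $(\tilde t\sigma_{\mathfrak B,z\mapsto c})^\mathfrak B=(\tilde t\sigma'_{\mathfrak B,z\mapsto c})^\mathfrak B$ for all $\sigma_{\mathfrak B,z\mapsto c},\sigma'_{\mathfrak B,z\mapsto c}\in g\text-Sub(\mathcal{L,L_\mathfrak B})$, then the $\mathcal L$-justification $z\to\tilde t[\mathbf x](z,\mathbf Z)$ characteristically justifies $(\mathfrak{A,B})\models a\to\tilde t\sigma_{\mathfrak A,z\mapsto a}\mathrel{:\!\cdot} c\to\tilde t\sigma_{\mathfrak B,z\mapsto c}$, for all $\sigma_{\mathfrak A,z\mapsto a}\in g\text-Sub(\mathcal{L,L_\mathfrak A})$ and $\sigma_{\mathfrak B,z\mapsto c}\in g\text-Sub(\mathcal{L,L_\mathfrak B})$ with $(\sigma_\mathfrak A\upharpoonright\mathcal X)=(\sigma_\mathfrak B\upharpoonright\mathcal X)$.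
   Context: $\mathfrak A$ is an algebra over $\mathcal L_\mathfrak A=\{\dot f_i\mid i\in I\}$ and $\mathfrak B$ an algebra over $\mathcal L_\mathfrak B=\{\dot g_i\mid i\in I\}$ (same index set $I$). $\mathcal L=\{\dot h_i\mid i\in I\}$ with $r_\mathcal L(\dot h_i)=\max\{r(\dot f_i),r(\dot g_i)\}$. Variables: $\mathcal X$-variables (placeholders for constant symbols), $\mathcal Z$-variables, and hedge variables $Z\in\mathscr Z$ which may be replaced by the empty hedge $\dot\lambda$. An $\mathcal L$-hedge is an $\mathcal L$-term over these variables; abstract means no constant symbols. A ground $(\mathcal{L,L_\mathfrak A})$-substitution maps each $\dot h_i\mapsto\dot f_i$, $\mathcal X$-variables to constant symbols of $\mathcal L_\mathfrak A$, $\mathcal Z$-variables to ground $\mathcal L_\mathfrak A$-terms, hedge variables to ground $\mathcal L_\mathfrak A$-terms or $\dot\lambda$; $g\text-Sub(\mathcal{L,L_\mathfrak A})$ is the set of these (similarly for $\mathfrak B$); $\sigma_{\mathfrak A,z\mapsto a}$ denotes one mapping $z$ to $a$. An $\mathcal L$-justification is $\tilde s\to\tilde t$ with abstract hedges and $\mathcal Z(\tilde t)\subseteq\mathcal Z(\tilde s)$. $Jus_{(\mathfrak{A,B})}(a\to b\mathrel{:\!\cdot} c\to d)$ is the set of justifications for which there are ground substitutions $\sigma_\mathfrak A,\sigma_\mathfrak B$ agreeing on $\mathcal X$ with $a^\mathfrak A\to b^\mathfrak A=(\tilde s\sigma_\mathfrak A)^\mathfrak A\to(\tilde t\sigma_\mathfrak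 A)^\mathfrak A$ and $c^\mathfrak B\to d^\mathfrak B=(\tilde s\sigma_\mathfrak B)^\mathfrak B\to(\tilde t\sigma_\mathfrak B)^\mathfrak B$. $(\mathfrak{A,B})\models a\to b\mathrel{:\!\cdot} c\to d$ iff either only trivial justifications (those valid for all arrows in both algebras) exist for $a\to b$ in $\mathfrak A$ and $c\to d$ in $\mathfrak B$, or $Jus_{(\mathfrak{A,B})}(a\to b\mathrel{:\!\cdot} c\to d)$ contains a non-trivial justification and is inclusion-maximal among sets $Jus_{(\mathfrak{A,B})}(a\to b\mathrel{:\!\cdot} c\to d')$ (${d'}^\mathfrak B\neq d^\mathfrak B$) containing a non-trivial justification. A justification $\tilde s\to\tilde t$ characteristically justifies the arrow proportion if it lies in $Jus_{(\mathfrak{A,B})}(a\to b\mathrel{:\!\cdot} c\to d)$ and lying in $Jus_{(\mathfrak{A,B})}(a\to b\mathrel{:\!\cdot} c\to d')$ implies $d'=d$; this entails that the arrow proportion holds. *)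

From Stdlib Require Import List Arith.
Import ListNotations.

Set Implicit Arguments.

(* An algebra over the language {f_i | i in I}: a carrier, a rank function
   and the interpretation of each function symbol.  [alg_op A i] is only
   ever applied to argument lists of length [alg_ar A i].  Constant symbols
   are the f_i with rank 0. *)
Record algebra (I : Type) := Algebra {
  carrier :> Type;
  alg_ar : I -> nat;
  alg_op : I -> list carrier -> carrier }.

(* Terms over the index set I (no variables); well-formedness w.r.t. a rank
   function makes them ground terms of the language. *)
Inductive gterm (I : Type) := GApp : I -> list (gterm I) -> gterm I.
Arguments GApp {I}.

Fixpoint gwf I (ar : I -> nat) (t : gterm I) : Prop :=
  match t with
  | GApp i ts => length ts = ar i /\
      (fix all (l : list (gterm I)) : Prop :=
         match l with nil => True | u :: l' => gwf ar u /\ all l' end) ts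
  end.

Fixpoint geval I (A : algebra I) (t : gterm I) : carrier A :=
  match t with
  | GApp i ts => alg_op A i
      ((fix ev (l : list (gterm I)) : list (carrier A) :=
          match l with nil => nil | u :: l' => geval A u :: ev l' end) ts)
  end.

Definition ground I (A : algebra I) (t : gterm I) : Prop := gwf (alg_ar A) t.

(* L-hedges: X-variables (placeholders for constant symbols), Z-variables,
   hedge variables (which may be replaced by the empty hedge), and the
   function symbols h_i of L. *)
Inductive hedge (I : Type) :=
  | HX : nat -> hedge I
  | HZ : nat -> hedge I
  | HH : nat -> hedge I
  | HApp : I -> list (hedge I) -> hedge I.
Arguments HX {I}. Arguments HZ {I}. Arguments HH {I}. Arguments HApp {I}.

Definition arL I (A B : algebra I) (i : I) : nat :=
  Nat.max (alg_ar A i) (alg_ar B i).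

Fixpoint hwf I (A B : algebra I) (t : hedge I) : Prop :=
  match t with
  | HApp i hs => length hs = arL A B i /\
      (fix all (l : list (hedge I)) : Prop :=
         match l with nil => True | u :: l' => hwf A B u /\ all l' end) hs
  | _ => True
  end.

Fixpoint habstract I (A B : algebra I) (t : hedge I) : Prop :=
  match t with
  | HApp i hs => arL A B i <> 0 /\
      (fix all (l : list (hedge I)) : Prop :=
         match l with nil => True | u :: l' => habstract A B u /\ all l' end) hs
  | _ => True
  end.

Fixpoint occZ I (z : nat) (t : hedge I) : Prop :=
  match t with
  | HZ z' => z' = z
  | HApp _ hs =>
      (fix ex (l : list (hedge I)) : Prop :=
         match l with nil => False | u :: l' => occZ z u \/ ex l' end) hs
  | _ => False
  end.

(* A ground (L, L_A)-substitution (h_i |-> f_i is implicit): X-variables go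
   to (indices of) constant symbols of L_A, Z-variables to ground L_A-terms,
   hedge variables to ground L_A-terms or the empty hedge (None). *)
Record gsub (I : Type) := GSub {
  sX : nat -> I;
  sZ : nat -> gterm I;
  sH : nat -> option (gterm I) }.

Definition gsub_ok I (A : algebra I) (s : gsub I) : Prop :=
  (forall x, alg_ar A (sX s x) = 0) /\
  (forall z, ground A (sZ s z)) /\
  (forall Z, match sH s Z with Some u => ground A u | None => True end).

(* Value of the hedge t sigma in A, as a (possibly empty) sequence of
   elements; None if t sigma is not well-formed (some f_i does not receive
   exactly r(f_i) arguments after deleting empty hedges). *)
Fixpoint heval I (A : algebra I) (s : gsub I) (t : hedge I)
  : option (list (carrier A)) :=
  match t with
  | HX x => Some [alg_op A (sX s x) nil]
  | HZ z => Some [geval A (sZ s z)]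
  | HH Z => match sH s Z with None => Some nil | Some u => Some [geval A u] end
  | HApp i hs =>
      match (fix evl (l : list (hedge I)) : option (list (carrier A)) :=
               match l with
               | nil => Some nil
               | u :: l' => match heval A s u, evl l' with
                            | Some vs, Some ws => Some (vs ++ ws)
                            | _, _ => None end
               end) hs with
      | Some vs => if Nat.eqb (length vs) (alg_ar A i)
                   then Some [alg_op A i vs] else None
      | None => None
      end
  end.

Definition hval I (A : algebra I) (s : gsub I) (t : hedge I) (v : carrier A)
  : Prop := heval A s t = Some [v].

(* s -> t lies in Jus_(A,B)(a -> b :. c -> d)  (a,b,c,d given by values) *)
Definition Jus I (A B : algebra I) (s t : hedge I)
  (a b : carrier A) (c d : carrier B) : Prop :=
  hwf A B s /\ hwf A B t /\ habstract A B s /\ habstract A B t /\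
  (forall z, occZ z t -> occZ z s) /\
  exists (sA sB : gsub I),
    gsub_ok A sA /\ gsub_ok B sB /\ (forall x, sX sA x = sX sB x) /\
    hval A sA s a /\ hval A sA t b /\ hval B sB s c /\ hval B sB t d.

Definition char_justifies I (A B : algebra I) (s t : hedge I)
  (a b : carrier A) (c d : carrier B) : Prop :=
  Jus A B s t a b c d /\
  forall d' : gterm I, ground B d' ->
    Jus A B s t a b c (geval B d') -> geval B d' = d.

(* Under [sigma_B] the hedge [z] evaluates to the value of [sigma_B z], so any
   justification of [c -> d'] by [z -> t] comes from a substitution sending [z]
   to a term with the same value as [c].  Replacing that term by [c] itself
   changes neither the substitution's validity nor the value of [t], and the
   hypothesis that [t] has only one value once [z] is mapped to [c] then
   forces [d' = d]. *)

From Stdlib Require Import List Arith.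

Set Implicit Arguments.

Section HedgeEvaluation.

Variables (I : Type) (A : algebra I).

Lemma heval_ext (s1 s2 : gsub I) :
  (forall x, sX s1 x = sX s2 x) ->
  (forall w, geval A (sZ s1 w) = geval A (sZ s2 w)) ->
  (forall w, sH s1 w = sH s2 w) ->
  forall t, heval A s1 t = heval A s2 t.
Proof.
  intros eX eZ eH. fix IH 1. intros [x | w | w | i hs]; simpl.
  - now rewrite eX.
  - now rewrite eZ.
  - now rewrite eH.
  - assert (Ehs : (fix evl (l : list (hedge I)) : option (list (carrier A)) :=
                     match l with
                     | nil => Some nil
                     | u :: l' => match heval A s1 u, evl l' with
                                  | Some vs, Some ws => Some (vs ++ ws)
                                  | _, _ => None end
                     end) hs =
                  (fix evl (l : list (hedge I)) : option (list (carrier A)) :=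
                     match l with
                     | nil => Some nil
                     | u :: l' => match heval A s2 u, evl l' with
                                  | Some vs, Some ws => Some (vs ++ ws)
                                  | _, _ => None end
                     end) hs).
    { induction hs as [| u hs IHhs]; [reflexivity |].
      now rewrite IHhs, (IH u). }
    now rewrite Ehs.
Qed.

Lemma hval_HZ (s : gsub I) (z : nat) (v : carrier A) :
  hval A s (HZ z) v <-> geval A (sZ s z) = v.
Proof.
  unfold hval; simpl. split; [now intros [= ->] | now intros ->].
Qed.

Definition gsub_setZ (s : gsub I) (z : nat) (u : gterm I) : gsub I :=
  GSub (sX s) (fun w => if Nat.eqb w z then u else sZ s w) (sH s).

Lemma sZ_setZ_same (s : gsub I) (z : nat) (u : gterm I) :
  sZ (gsub_setZ s z u) z = u.
Proof. simpl. now rewrite Nat.eqb_refl. Qed.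

Lemma gsub_ok_setZ (s : gsub I) (z : nat) (u : gterm I) :
  gsub_ok A s -> ground A u -> gsub_ok A (gsub_setZ s z u).
Proof.
  intros (okX & okZ & okH) Gu. split; [| split]; simpl; auto.
  intros w. now destruct (Nat.eqb w z).
Qed.

Lemma heval_setZ (s : gsub I) (z : nat) (u : gterm I) (t : hedge I) :
  geval A u = geval A (sZ s z) -> heval A (gsub_setZ s z u) t = heval A s t.
Proof.
  intros Eu. apply heval_ext; simpl; auto.
  intros w. destruct (Nat.eqb w z) eqn:Ew; auto.
  apply Nat.eqb_eq in Ew. now subst w.
Qed.

End HedgeEvaluation.

Lemma Jus_var (I : Type) (A B : algebra I) (t : hedge I) (z : nat)
  (sA sB : gsub I) (b : carrier A) (d : carrier B) :
  hwf A B t -> habstract A B t -> (forall z', occZ z' t -> z' = z) ->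
  gsub_ok A sA -> gsub_ok B sB -> (forall x, sX sA x = sX sB x) ->
  hval A sA t b -> hval B sB t d ->
  Jus A B (HZ z) t (geval A (sZ sA z)) b (geval B (sZ sB z)) d.
Proof.
  intros Hwf Hab Hocc okA okB eX hb hd.
  split; [exact Logic.I |]. split; [exact Hwf |].
  split; [exact Logic.I |]. split; [exact Hab |]. split.
  - intros w Hw. symmetry. now apply Hocc.
  - exists sA, sB. repeat (split; [assumption |]).
    split; [now apply hval_HZ |]. split; [exact hb |].
    split; [now apply hval_HZ | exact hd].
Qed.

Lemma Jus_var_witness_B (I : Type) (A B : algebra I) (t : hedge I) (z : nat)
  (a b : carrier A) (c : gterm I) (d : carrier B) :
  ground B c -> Jus A B (HZ z) t a b (geval B c) d ->
  exists sB, gsub_ok B sB /\ sZ sB z = c /\ hval B sB t d.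
Proof.
  intros Gc (_ & _ & _ & _ & _ & _ & sB & _ & okB & _ & _ & _ & hc & hd).
  apply hval_HZ in hc.
  exists (gsub_setZ sB z c). split; [| split].
  - now apply gsub_ok_setZ.
  - apply sZ_setZ_same.
  - unfold hval. now rewrite heval_setZ.
Qed.

Theorem mainTheorem2 (I : Type) (A B : algebra I) (t : hedge I) (z : nat)
  (a c : gterm I) :
  hwf A B t -> habstract A B t ->
  (forall z', occZ z' t <-> z' = z) ->
  ground A a -> ground B c ->
  (forall (sB sB' : gsub I) (v v' : carrier B),
     gsub_ok B sB -> gsub_ok B sB' -> sZ sB z = c -> sZ sB' z = c ->
     hval B sB t v -> hval B sB' t v' -> v = v') ->
  forall (sA sB : gsub I) (b : carrier A) (d : carrier B),
    gsub_ok A sA -> gsub_ok B sB -> sZ sA z = a -> sZ sB z = c ->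
    (forall x, sX sA x = sX sB x) ->
    hval A sA t b -> hval B sB t d ->
    char_justifies A B (HZ z) t (geval A a) b (geval B c) d.
Proof.
  intros Hwf Hab Hocc _ Gc Huniq sA sB b d okA okB eA eB eX hb hd.
  split.
  - subst a c. apply Jus_var; auto. intros z'. apply Hocc.
  - intros d' _ J.
    destruct (Jus_var_witness_B c Gc J) as (sB' & okB' & eB' & hd').
    exact (Huniq sB' sB _ _ okB' okB eB' eB hd' hd).
Qed.
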